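(* Consider a 3-S 3-D MUN-D over $\mathbb{F}_{2^m}$ (as in the context) with nonzero min-cut between every $S_i$ and $T_j$, let $k\mid 2^m-1$ and $\alpha\in\mathbb{F}_{2^m}$ of multiplicative order $k$. For each $i\in\{1,2,3\}$ and each $q\in\{1,\dots,k-1\}$, $b_i(q)$ is a constant if and only if $b_i(0)$ is a constant.
   Context: A 3-S 3-D MUN-D: finite directed acyclic graph with unit-delay links, sources $S_1,S_2,S_3$ (one process each), destinations $T_1,T_2,T_3$ ($T_i$ demands $S_i$'s process), min-cut between $S_i$ and $T_i$ equal to $1$, linear network coding with local encoding coefficient vector $\underline{\varepsilon}$ (indeterminates); $M_{ij}(\underline{\varepsilon},D)$ is the scalar transfer polynomial from $S_i$ to $T_j$ (common delay removed) and $M_{ij}(\underline{\varepsilon},x)$ its value at $D=x$. Writing $M_{ij}$ for $M_{ij}(\underline{\varepsilon},\alpha^q)$: $b_1(q)=\frac{M_{21}M_{13}}{M_{11}M_{23}}$, $b_2(q)=\frac{M_{22}M_{13}}{M_{12}M_{23}}$, $b_3(q)=\frac{M_{33}M_{12}}{M_{13}M_{32}}$. ''Constant'' means independent of $\underline{\varepsilon}$. *)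

From HB Require Import structures.
From mathcomp Require Import all_boot all_order all_algebra all_field.
From mathcomp Require Import fraction.
From mathcomp.multinomials Require Import mpoly.
Set Implicit Arguments. Unset Strict Implicit. Unset Printing Implicit Defensive.
Import Order.TTheory GRing.Theory.
Local Open Scope ring_scope.

Section Network.
Variables (F : fieldType) (V E : finType) (tl hd : E -> V).

Definition follows : rel E := fun e e' => hd e == tl e'.

Definition acyclic : Prop :=
  forall (e : E) (p : seq E), path follows e p -> last e p = e -> p = [::].

Definition is_path (e e' : E) (t : seq E) : bool :=
  path follows e t && (last e t == e').

(* Number of local encoding coefficients: one indeterminate per ordered pair
   of edges (only adjacent pairs are actually used). *)
Definition nvar := #|{: E * E}|.
Definition eps (ab : E * E) : {mpoly F[nvar]} := 'X_(enum_rank ab).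

Definition path_gain (e : E) (t : seq E) : {mpoly F[nvar]} :=
  \prod_(ab <- zip (e :: t) t) eps ab.

(* Delay (number of unit-delay links) of the path e :: t. *)
Definition path_delay (e : E) (t : seq E) : nat := (size t).+1.

(* In an acyclic network every path has at most #|E| edges, so paths from e
   to e' are exactly the tuples below. *)
Definition min_delay (e e' : E) : nat :=
  \big[minn/#|E|.+1]_(n < #|E|) \big[minn/#|E|.+1]_(t : n.-tuple E | is_path e e' t)
     path_delay e t.

(* Transfer polynomial M(eps, D) from edge e to edge e' with common delay
   removed, evaluated at D = x. *)
Definition transfer (e e' : E) (x : F) : {mpoly F[nvar]} :=
  \sum_(n < #|E|) \sum_(t : n.-tuple E | is_path e e' t)
     (x ^+ (path_delay e t - min_delay e e')) *: path_gain e t.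

End Network.

Definition constant_frac (F : idomainType) (n : nat)
    (b : {fraction {mpoly F[n]}}) : Prop :=
  exists c : F, b = FracField.tofrac (c%:MP).

Definition i1 : 'I_3 := @Ordinal 3 0 isT.
Definition i2 : 'I_3 := @Ordinal 3 1 isT.
Definition i3 : 'I_3 := @Ordinal 3 2 isT.

Section Ratios.
Variables (F : fieldType) (V E : finType) (tl hd : E -> V)
  (sigma tau : 'I_3 -> E) (alpha : F).

(* M_ij(eps, alpha^q) as an element of the rational function field F(eps);
   sigma i = the outgoing edge of S_i, tau j = the incoming edge of T_j. *)
Definition Mq (q : nat) (i j : 'I_3) : {fraction {mpoly F[nvar E]}} :=
  FracField.tofrac (transfer tl hd (sigma i) (tau j) (alpha ^+ q)).

Definition bq (i : 'I_3) (q : nat) : {fraction {mpoly F[nvar E]}} :=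
  let M := Mq q in
  if i == i1 then (M i2 i1 * M i1 i3) / (M i1 i1 * M i2 i3)
  else if i == i2 then (M i2 i2 * M i1 i3) / (M i1 i2 * M i2 i3)
  else (M i3 i3 * M i1 i2) / (M i1 i3 * M i3 i2).
End Ratios.

From HB Require Import structures.
From mathcomp Require Import all_boot all_order all_algebra all_field.
From mathcomp Require Import fraction.
From mathcomp.multinomials Require Import mpoly.
Import Order.TTheory GRing.Theory.
Local Open Scope ring_scope.

(* The substitution eps |-> x eps multiplies the gain of a path with n edges
   by x^(n-1), while evaluating at D = x contributes x^(n - min_delay).  Hence
   M_ij(eps, x) = c_ij * M_ij(x eps, 1) for a nonzero scalar c_ij, and for
   x = alpha^q <> 0 the substitution is an automorphism of F[eps].  Whether a
   ratio of products of the M_ij is constant, i.e. whether numerator and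
   denominator are proportional, is invariant under nonzero scalars and
   automorphisms, so b_i(q) is constant iff b_i(0) is. *)

Definition proportional {R : fieldType} {U : lmodType R} (u v : U) : Prop :=
  v = 0 \/ exists c : R, u = c *: v.

Section Proportional.
Variables (R : fieldType) (U : lmodType R).

Lemma proportionalZ (a b : R) (u v : U) : a != 0 -> b != 0 ->
  proportional (a *: u) (b *: v) <-> proportional u v.
Proof.
move=> a0 b0; split=> [[/eqP|[c]]|[->|[c ->]]].
- by rewrite scaler_eq0 (negbTE b0) => /eqP v0; left.
- move=> /(congr1 ( *:%R a^-1)); rewrite !scalerA mulVf // scale1r => ->.
  by right; exists (a^-1 * (c * b)).
- by left; rewrite scaler0.
- by right; exists (a * c / b); rewrite !scalerA mulfVK.
Qed.

Lemma proportional_inj (W : lmodType R) (f : {linear U -> W}) (u v : U) :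
  injective f -> proportional (f u) (f v) <-> proportional u v.
Proof.
move=> f_inj; split=> [[fv0|[c fuv]]|[->|[c ->]]].
- by left; apply: f_inj; rewrite fv0 linear0.
- by right; exists c; apply: f_inj; rewrite linearZ.
- by left; rewrite linear0.
- by right; exists c; rewrite linearZ.
Qed.

End Proportional.

Section ScaleVariables.
Variables (F : fieldType) (n : nat).

Definition scale_vars (x : F) : n.-tuple {mpoly F[n]} := [tuple x *: 'X_i | i < n].

Lemma comp_scale_varsX (x : F) (i : 'I_n) : 'X_i \mPo scale_vars x = x *: 'X_i.
Proof. by rewrite comp_mpolyXU -tnth_nth tnth_map tnth_ord_tuple. Qed.

Lemma comp_scale_varsK (x : F) : x != 0 ->
  cancel (comp_mpoly (scale_vars x)) (comp_mpoly (scale_vars x^-1)).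
Proof.
move=> x0 p; rewrite [p \mPo _]comp_mpolyEX raddf_sum /=.
rewrite -[RHS](comp_mpoly_id p) [RHS]comp_mpolyEX.
apply: eq_bigr => mon _; rewrite comp_mpolyZ !comp_mpolyX rmorph_prod /=.
congr (_ *: _); apply: eq_bigr => i _.
rewrite rmorphXn /= !tnth_map !tnth_ord_tuple comp_mpolyZ comp_scale_varsX.
by rewrite scalerA mulfV // scale1r.
Qed.

Lemma proportional_comp_scale_vars (x : F) (P Q : {mpoly F[n]}) : x != 0 ->
  proportional (P \mPo scale_vars x) (Q \mPo scale_vars x) <-> proportional P Q.
Proof.
move=> x0; apply: proportional_inj => p p' /(congr1 (comp_mpoly (scale_vars x^-1))).
by rewrite !comp_scale_varsK.
Qed.

Lemma constant_frac_divE (P Q : {mpoly F[n]}) :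
  constant_frac (FracField.tofrac P / FracField.tofrac Q) <-> proportional P Q.
Proof.
have [-> | Q0] := eqVneq Q 0.
  by split=> [_|_]; [left | exists 0; rewrite tofrac0 invr0 mulr0].
have tQ0 : FracField.tofrac Q != 0 by rewrite tofrac_eq0.
split=> [[c PQc] | [/eqP | [c ->]]]; last 2 first.
- by rewrite (negbTE Q0).
- by exists c; rewrite -mul_mpolyC tofracM mulfK.
right; exists c; apply/eqP; rewrite -tofrac_eq -mul_mpolyC tofracM -PQc.
by rewrite mulfVK.
Qed.

Lemma constant_frac_cross_ratio_scale (x : F) (A B C D : {mpoly F[n]}) (a b c d : F) :
  x != 0 -> a != 0 -> b != 0 -> c != 0 -> d != 0 ->
  let phi p := p \mPo scale_vars x in
  constant_frac (FracField.tofrac (a *: phi A) * FracField.tofrac (b *: phi B) /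
    (FracField.tofrac (c *: phi C) * FracField.tofrac (d *: phi D))) <->
  constant_frac (FracField.tofrac A * FracField.tofrac B /
    (FracField.tofrac C * FracField.tofrac D)).
Proof.
move=> x0 a0 b0 c0 d0 phi; rewrite -!tofracM !constant_frac_divE.
rewrite -!scalerAl -!scalerAr !scalerA -!rmorphM.
by rewrite proportionalZ ?mulf_neq0 // proportional_comp_scale_vars.
Qed.

End ScaleVariables.

Lemma prodr_const_seq (R : pzSemiRingType) (I : Type) (r : seq I) (x : R) :
  \prod_(i <- r) x = x ^+ size r.
Proof. by elim: r => [|a r IH]; rewrite ?big_nil ?big_cons ?IH ?exprS. Qed.

Section TransferScaling.
Variables (F : fieldType) (V E : finType) (tl hd : E -> V).

Lemma path_gain_comp_scale_vars (x : F) (e : E) (t : seq E) :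
  path_gain F e t \mPo scale_vars F (nvar E) x = x ^+ size t *: path_gain F e t.
Proof.
rewrite /path_gain rmorph_prod /=.
under eq_bigr do rewrite comp_scale_varsX.
by rewrite scaler_prod prodr_const_seq size_zip /= (minn_idPr (leqnSn _)).
Qed.

Lemma min_delay_le (e e' : E) (n : nat) (t : n.-tuple E) :
  (n < #|E|)%N -> is_path tl hd e e' t -> (min_delay tl hd e e' <= path_delay e t)%N.
Proof.
move=> ltn pt; rewrite /min_delay -minEnat.
apply: leq_trans (@bigmin_le _ nat _ _ (Ordinal ltn) _) _.
exact: (@bigmin_le_cond _ nat _ _ _ _ (fun t : n.-tuple E => path_delay e t) pt).
Qed.

Lemma transfer_scale (x : F) (e e' : E) : x != 0 ->
  transfer tl hd e e' x = (x / x ^+ min_delay tl hd e e') *: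
    (transfer tl hd e e' 1 \mPo scale_vars F (nvar E) x).
Proof.
move=> x0; rewrite /transfer [X in _ *: X]raddf_sum scaler_sumr.
apply: eq_bigr => -[n ltn] _; rewrite [X in _ *: X]raddf_sum scaler_sumr.
apply: eq_bigr => t pt /=.
rewrite expr1n scale1r path_gain_comp_scale_vars scalerA size_tuple.
rewrite expfB_cond; last by rewrite (negbTE x0) add0n; exact: min_delay_le pt.
by rewrite /path_delay size_tuple exprS mulrAC.
Qed.

End TransferScaling.

Theorem proposition1
  (m : nat) (F : finFieldType) (HF2 : 2 \in [pchar F]) (HFcard : #|F| = (2 ^ m)%N)
  (V E : finType) (tl hd : E -> V)
  (S T : 'I_3 -> V) (sigma tau : 'I_3 -> E)
  (Hacyc : acyclic tl hd)
  (HSinj : injective S) (HTinj : injective T)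
  (Hsigma : forall i, tl (sigma i) = S i)
  (Hsigma_uniq : forall i e, tl e = S i -> e = sigma i)
  (Htau : forall j, hd (tau j) = T j)
  (Htau_uniq : forall j e, hd e = T j -> e = tau j)
  (Hcut : forall i j, exists t : seq E, is_path tl hd (sigma i) (tau j) t)
  (k : nat) (Hk : (k %| 2 ^ m - 1)%N) (alpha : F) (Halpha : k.-primitive_root alpha) :
  forall (i : 'I_3) (q : nat), (1 <= q <= k - 1)%N ->
    (constant_frac (bq tl hd sigma tau alpha i q)
     <-> constant_frac (bq tl hd sigma tau alpha i 0)).
Proof.
move=> i q _.
have alpha0 : alpha != 0.
  apply: contra_eq_neq (prim_expr_order Halpha) => ->.
  by rewrite expr0n gtn_eqF ?(prim_order_gt0 Halpha) //= eq_sym oner_neq0.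
set x := alpha ^+ q; have x0 : x != 0 by rewrite expf_neq0.
pose c a b : F := x / x ^+ min_delay tl hd (sigma a) (tau b).
have c0 a b : c a b != 0 by rewrite mulf_neq0 ?invr_neq0 ?expf_neq0.
have Mq_scale a b : Mq tl hd sigma tau alpha q a b =
    FracField.tofrac (c a b *: (transfer tl hd (sigma a) (tau b) 1 \mPo scale_vars F _ x)).
  by rewrite /Mq transfer_scale.
have Mq0 a b : Mq tl hd sigma tau alpha 0 a b =
    FracField.tofrac (transfer tl hd (sigma a) (tau b) 1).
  by rewrite /Mq expr0.
rewrite /bq /=; case: ifP => _; [|case: ifP => _]; rewrite !Mq_scale !Mq0;
  exact: constant_frac_cross_ratio_scale.
Qed.
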